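(* Let $\mathscr{C}\subseteq\mathbb{F}_2^{n}$ be a binary linear block code of length $n$ and dimension $k$, with no idle bits and with minimum distance $d_{\min}\ge 2$. Fix $p\in[0,1]$. For each position $j\in\{1,\dots,n\}$, let $E_j\subseteq\{1,\dots,n\}\setminus\{j\}$ be a random set of erased positions, each position $\ell\neq j$ belonging to $E_j$ independently with probability $p$, and let $S_j=\{1,\dots,n\}\setminus(E_j\cup\{j\})$ be the set of non-erased positions other than $j$. Say that position $j$ is recoverable by (extrinsic) MAP erasure decoding if for all $c,c'\in\mathscr{C}$ with $c_\ell=c'_\ell$ for all $\ell\in S_j$ one has $c_j=c'_j$. Let $q$ be the probability that position $j$ is not recoverable, averaged uniformly over $j\in\{1,\dots,n\}$. Then $$q=\frac{1}{n}\sum_{t=0}^{n-1}p^{t}(1-p)^{n-1-t}\Big[(n-t)\,\tilde e_{n-t}-(t+1)\,\tilde e_{n-1-t}\Big],$$ where $\tilde e_g$ is the $g$th un-normalized information function of $\mathscr{C}$.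
   Context: A coordinate of a linear code is an idle bit if it equals $0$ in every codeword (equivalently, the corresponding column of a generator matrix is zero). Let $\mathbf{G}$ be a $k\times n$ generator matrix of $\mathscr{C}$. For $0\le g\le n$, the $g$th un-normalized information function of $\mathscr{C}$ is $\tilde e_g=\sum_{T}\mathrm{rank}(\mathbf{G}_T)$, where the sum runs over all $\binom{n}{g}$ subsets $T\subseteq\{1,\dots,n\}$ of size $g$ and $\mathbf{G}_T$ is the $k\times g$ submatrix of $\mathbf{G}$ formed by the columns indexed by $T$ (with $\mathrm{rank}$ of an empty matrix equal to $0$, so $\tilde e_0=0$); it does not depend on the choice of generator matrix. *)

From HB Require Import structures.
From mathcomp Require Import all_boot all_order all_algebra all_fingroup all_field.
Set Implicit Arguments. Unset Strict Implicit. Unset Printing Implicit Defensive.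
Import GRing.Theory Num.Theory.
Local Open Scope ring_scope.

(* A binary linear code of length n and dimension k is the row space of a
   generator matrix G : 'M['F_2]_(k, n) with row_free G (rank k). *)

Definition codeword (k n : nat) (G : 'M['F_2]_(k, n)) (c : 'rV['F_2]_n) : bool :=
  (c <= G)%MS.

Definition no_idle_bits (k n : nat) (G : 'M['F_2]_(k, n)) : Prop :=
  forall j : 'I_n, exists c : 'rV['F_2]_n, codeword G c /\ c 0 j != 0.

Definition wt (n : nat) (c : 'rV['F_2]_n) : nat := #|[set l : 'I_n | c 0 l != 0]|.

Definition dmin_ge2 (k n : nat) (G : 'M['F_2]_(k, n)) : Prop :=
  forall c : 'rV['F_2]_n, codeword G c -> c != 0 -> (2 <= wt c)%N.

Definition colsubset (k n : nat) (G : 'M['F_2]_(k, n)) (T : {set 'I_n})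
  : 'M['F_2]_(k, #|T|) :=
  colsub (fun i : 'I_#|T| => enum_val i) G.

Definition info_fun (k n : nat) (G : 'M['F_2]_(k, n)) (g : nat) : nat :=
  (\sum_(T : {set 'I_n} | #|T| == g) \rank (colsubset G T))%N.

Definition recoverable (k n : nat) (G : 'M['F_2]_(k, n)) (j : 'I_n)
  (S : {set 'I_n}) : bool :=
  [forall c : 'rV['F_2]_n, forall c' : 'rV['F_2]_n,
     codeword G c ==> codeword G c' ==>
     [forall l in S, c 0 l == c' 0 l] ==> (c 0 j == c' 0 j)].

(* average (over j) probability that j is not recoverable, where each l <> j
   is erased independently with probability p (E = erased set, S = ~:(j |: E)) *)
Definition unrec_prob (R : realFieldType) (k n : nat) (G : 'M['F_2]_(k, n))
  (p : R) : R :=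
  (n%:R)^-1 * \sum_(j < n) \sum_(E : {set 'I_n} | j \notin E)
     p ^+ #|E| * (1 - p) ^+ (n.-1 - #|E|) *
     (~~ recoverable G j (~: (j |: E)))%:R.

From HB Require Import structures.
From mathcomp Require Import all_boot all_order all_algebra all_fingroup all_field.
Set Implicit Arguments. Unset Strict Implicit. Unset Printing Implicit Defensive.
Import GRing.Theory Num.Theory.
Local Open Scope ring_scope.

(* Let r(T) be the rank of the columns of G indexed by T.  Position j is
   recoverable from S (with j not in S) exactly when column j lies in the span
   of the columns in S; so r(S u {j}) is r(S) when j is recoverable and
   r(S) + 1 otherwise.  Hence the indicator that j is not recoverable from the
   complement of E u {j} is r(~E) - r(~(E u {j})).  Double counting the pairs
   (j, E) with j not in E rewrites the two weighted sums as sums over the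
   sets E alone, with multiplicities n - |E| and |E|; grouping by |E| then
   produces the information functions of the complementary size. *)

Section ColumnSpans.
Variables (F : fieldType) (k n : nat) (G : 'M[F]_(k, n)).

(* G^T with the rows outside T replaced by zero rows: its row space is the
   span of the columns of G indexed by T. *)
Definition cols_on (T : {set 'I_n}) : 'M[F]_(n, k) :=
  \matrix_(l, i) (if l \in T then G i l else 0).

Lemma row_cols_on T l : row l (cols_on T) = if l \in T then row l G^T else 0.
Proof. by apply/rowP => i; rewrite !mxE; case: (l \in T); rewrite ?mxE. Qed.

Lemma row_sub_cols_on (T : {set 'I_n}) l : l \in T -> (row l G^T <= cols_on T)%MS.
Proof. by move=> Tl; have := row_sub l (cols_on T); rewrite row_cols_on Tl. Qed.

Lemma cols_onU1 j T : (cols_on (j |: T) == cols_on T + row j G^T)%MS.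
Proof.
apply/andP; split.
  apply/row_subP => l; rewrite row_cols_on in_setU1.
  case: eqP => [->|_] /=; first exact: addsmxSr.
  case: ifP => Tl; last exact: sub0mx.
  exact/(submx_trans (row_sub_cols_on Tl))/addsmxSl.
rewrite addsmx_sub row_sub_cols_on ?setU11 // andbT.
apply/row_subP => l; rewrite row_cols_on; case: ifP => Tl; last exact: sub0mx.
by rewrite row_sub_cols_on // in_setU1 Tl orbT.
Qed.

Lemma mulmx_cols_on T (y : 'cV[F]_k) l :
  (cols_on T *m y) l 0 = if l \in T then (row l G^T *m y) 0 0 else 0.
Proof.
rewrite !mxE; case: ifP => Tl.
  by apply: eq_bigr => i _; rewrite !mxE Tl.
by apply: big1 => i _; rewrite !mxE Tl mul0r.
Qed.

Lemma mulmx_entry (x : 'rV[F]_k) l : (x *m G) 0 l = (row l G^T *m x^T) 0 0.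
Proof. by rewrite !mxE; apply: eq_bigr => i _; rewrite !mxE mulrC. Qed.

End ColumnSpans.

Lemma mxrank_adds_row (F : fieldType) m k (A : 'M[F]_(m, k)) (u : 'rV[F]_k) :
  \rank (A + u)%MS = (\rank A + ~~ (u <= A)%MS)%N.
Proof.
have [uA | uNA] /= := boolP (u <= A)%MS; first by rewrite addn0 (addsmx_idPl uA).
have [le_rank eq_rank] := mxrank_leqif_sup (addsmxSl A u).
have lt_rank : (\rank A < \rank (A + u))%N.
  by rewrite ltn_neqAle le_rank andbT eq_rank addsmx_sub submx_refl.
have [le_sum _] := mxrank_adds_leqif A u.
apply/eqP; rewrite eqn_leq addn1 lt_rank andbT.
by rewrite (leq_trans le_sum) // -[X in (_ <= X)%N]addn1 leq_add2l rank_leq_row.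
Qed.

Section Recoverability.
Variables (k n : nat) (G : 'M['F_2]_(k, n)).

Lemma mxrank_colsubset T : \rank (colsubset G T) = \rank (cols_on G T).
Proof.
rewrite -mxrank_tr /colsubset trmx_mxsub; apply/eqmx_rank/andP; split.
  apply/row_subP => i; rewrite row_mxsub mxsub_id.
  exact/row_sub_cols_on/enum_valP.
apply/row_subP => l; rewrite row_cols_on; case: ifP => Tl; last exact: sub0mx.
have := row_sub (enum_rank_in Tl l) (mxsub (fun i : 'I_#|T| => enum_val i) id G^T).
by rewrite row_mxsub mxsub_id enum_rankK_in.
Qed.

Lemma sub_cols_on_recoverable j S :
  (row j G^T <= cols_on G S)%MS -> recoverable G j S.
Proof.
move=> /submxP [w def_j]; apply/forallP => c; apply/forallP => c'.
apply/implyP => /submxP [x ->]; apply/implyP => /submxP [x' ->].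
apply/implyP => /forall_inP eq_on_S; rewrite -subr_eq0.
have -> : (x *m G) 0 j - (x' *m G) 0 j = ((x - x') *m G) 0 j.
  by rewrite mulmxBl !mxE.
rewrite mulmx_entry def_j -mulmxA mxE; apply/eqP/big1 => l _.
rewrite mulmx_cols_on; case: ifP => Sl; last by rewrite mulr0.
rewrite -mulmx_entry mulmxBl !mxE.
by have /eqP := eq_on_S l Sl; rewrite !mxE => ->; rewrite subrr mulr0.
Qed.

(* Each column y of the cokernel of [cols_on G S] is a message whose codeword
   vanishes on S; recoverability forces it to vanish at j as well, i.e. column
   j of G is annihilated by the cokernel. *)
Lemma recoverable_sub_cols_on j S :
  recoverable G j S -> (row j G^T <= cols_on G S)%MS.
Proof.
move=> /forallP rec_j; rewrite submxE; apply/eqP/rowP => i; rewrite [RHS]mxE.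
pose y := cokermx (cols_on G S) *m delta_mx i (0 : 'I_1).
have Sy0 : cols_on G S *m y = 0 by rewrite /y mulmxA mulmx_coker mul0mx.
have /forallP/(_ 0) := rec_j (y^T *m G).
rewrite /codeword submxMl sub0mx /=.
have -> : [forall l in S, (y^T *m G) 0 l == (0 : 'rV_n) 0 l].
  apply/forall_inP => l Sl.
  have : (cols_on G S *m y) l 0 = 0 by rewrite Sy0 mxE.
  by rewrite mulmx_cols_on Sl (mulmx_entry G) trmxK [X in _ == X]mxE => ->.
rewrite /= (mulmx_entry G) trmxK [X in _ == X]mxE => /eqP; apply: etrans.
by rewrite /y mulmxA -colE [RHS]mxE.
Qed.

Lemma recoverableE j S : recoverable G j S = (row j G^T <= cols_on G S)%MS.
Proof.
by apply/idP/idP; [exact: recoverable_sub_cols_on | exact: sub_cols_on_recoverable].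
Qed.

Lemma mxrank_colsubsetU1 j S :
  \rank (colsubset G (j |: S)) = (\rank (colsubset G S) + ~~ recoverable G j S)%N.
Proof.
rewrite !mxrank_colsubset recoverableE (eqmx_rank (cols_onU1 G j S)).
exact: mxrank_adds_row.
Qed.

Lemma not_recoverable_rank (R : pzRingType) j (E : {set 'I_n}) : j \notin E ->
  (~~ recoverable G j (~: (j |: E)))%:R =
  (\rank (colsubset G (~: E)))%:R - (\rank (colsubset G (~: (j |: E))))%:R :> R.
Proof.
move=> Ej; have -> : ~: E = j |: ~: (j |: E).
  by rewrite setCU setIC -setDE setD1K // inE.
by rewrite mxrank_colsubsetU1 natrD addrC addKr.
Qed.

End Recoverability.

Section DoubleCounting.
Variables (R : pzRingType) (T : finType).

Lemma sum_exchange_card (P : T -> {set T} -> bool) (f : {set T} -> R) :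
  \sum_j \sum_(E | P j E) f E = \sum_E #|[set j | P j E]|%:R * f E.
Proof.
under eq_bigr do rewrite big_mkcond.
rewrite exchange_big; apply: eq_bigr => E _ /=.
rewrite -big_mkcond (eq_bigl (mem [set j | P j E])) ?sumr_const ?mulr_natl //.
by move=> j /=; rewrite inE.
Qed.

Lemma sum_notin (f : {set T} -> R) :
  \sum_(j : T) \sum_(E : {set T} | j \notin E) f E =
  \sum_(E : {set T}) (#|T| - #|E|)%:R * f E.
Proof.
rewrite sum_exchange_card; apply: eq_bigr => E _.
have -> : [set j | j \notin E] = ~: E by apply/setP => j; rewrite !inE.
by rewrite cardsCs setCK.
Qed.

Lemma sum_notin_setU1 (f : {set T} -> R) :
  \sum_(j : T) \sum_(E : {set T} | j \notin E) f (j |: E) =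
  \sum_(E : {set T}) #|E|%:R * f E.
Proof.
have sum_in j :
    \sum_(E : {set T} | j \notin E) f (j |: E) = \sum_(F : {set T} | j \in F) f F.
  rewrite [RHS](reindex_onto (fun E => j |: E) (fun F => F :\ j)) /=; last first.
    by move=> F Fj; rewrite setD1K.
  apply: eq_bigl => E; rewrite setU11 /=.
  have [Ej | Ej] := boolP (j \in E); last by rewrite setU1K // eqxx.
  by apply/esym/eqP => def_E; move: Ej; rewrite -def_E setD11.
under eq_bigr do rewrite sum_in.
rewrite sum_exchange_card; apply: eq_bigr => E _.
by congr (_%:R * _); apply: eq_card => j; rewrite inE.
Qed.

Lemma sum_by_card (g : nat -> R) (h : {set T} -> R) :
  \sum_(E : {set T}) g #|E| * h E =
  \sum_(t < #|T|.+1) g t * \sum_(E : {set T} | #|E| == t) h E.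
Proof.
have card_small (E : {set T}) : (#|E| < #|T|.+1)%N by rewrite ltnS max_card.
rewrite (partition_big (fun E => Ordinal (card_small E)) predT) //=.
apply: eq_bigr => t _; rewrite mulr_sumr.
by apply: eq_big => [E | E /eqP <-] //; rewrite -val_eqE.
Qed.

End DoubleCounting.

Lemma sum_rank_setC (R : pzRingType) k n (G : 'M['F_2]_(k, n)) (g : nat -> R) :
  \sum_(E : {set 'I_n}) g #|E| * (\rank (colsubset G (~: E)))%:R =
  \sum_(t < n.+1) g t * (info_fun G (n - t))%:R.
Proof.
rewrite sum_by_card card_ord; apply: eq_bigr => t _; congr (_ * _).
rewrite /info_fun natr_sum [RHS](reindex_inj (@setC_inj _)) /=.
apply: eq_bigl => E; rewrite [#|~: E|]cardsCs setCK card_ord.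
have E_le_n : (#|E| <= n)%N by rewrite -[X in (_ <= X)%N]card_ord max_card.
apply/eqP/eqP => [-> // | /(congr1 (subn n))]; by rewrite !subKn // -ltnS.
Qed.

Theorem proposition1 (R : realFieldType) (k n : nat) (G : 'M['F_2]_(k, n))
  (p : R) :
  row_free G -> no_idle_bits G -> dmin_ge2 G -> 0 <= p -> p <= 1 ->
  unrec_prob G p =
  (n%:R)^-1 * \sum_(t < n) p ^+ t * (1 - p) ^+ (n.-1 - t) *
     ((n - t)%:R * (info_fun G (n - t))%:R
      - (t + 1)%:R * (info_fun G (n.-1 - t))%:R).
Proof.
move=> _ _ _ _ _; rewrite /unrec_prob; congr (_ * _).
set w := fun t => p ^+ t * (1 - p) ^+ (n.-1 - t).
set r := fun E : {set 'I_n} => (\rank (colsubset G (~: E)))%:R : R.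
transitivity (\sum_(j < n) \sum_(E : {set 'I_n} | j \notin E) w #|E| * r E
            - \sum_(j < n) \sum_(E : {set 'I_n} | j \notin E)
                 w #|j |: E|.-1 * r (j |: E)).
  rewrite -sumrB; apply: eq_bigr => j _; rewrite -sumrB; apply: eq_bigr => E Ej.
  by rewrite not_recoverable_rank // mulrBr cardsU1 Ej.
rewrite (sum_notin_setU1 (fun F => w #|F|.-1 * r F)).
rewrite (sum_notin (fun E => w #|E| * r E)) card_ord.
under eq_bigr do rewrite mulrA.
under [X in _ - X]eq_bigr do rewrite mulrA.
rewrite (sum_rank_setC G (fun t => (n - t)%:R * w t)).
rewrite (sum_rank_setC G (fun t => t%:R * w t.-1)) big_ord_recr big_ord_recl /=.
rewrite subnn mulr0n !mul0r addr0 add0r -sumrB; apply: eq_bigr => t _.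
rewrite /bump /= add0n add1n addn1 subnS.
have -> : ((n - t).-1 = n.-1 - t)%N by rewrite -!subn1 subnAC.
by rewrite mulrBr !(mulrCA (w t)) !mulrA.
Qed.
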